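(* Consider the 2D patch scheme: $N_x\times N_y$ patches indexed $(I,J)$ on a doubly periodic macroscale lattice, each with interior points $(i,j)$, $i=1,\dots,n_x$, $j=1,\dots,n_y$, and interior values evolving by $$\partial_tu^{I,J}_{i,j}=\big[\kappa^{I,J}_{i+\frac12,j}(u^{I,J}_{i+1,j}-u^{I,J}_{i,j})+\kappa^{I,J}_{i-\frac12,j}(u^{I,J}_{i-1,j}-u^{I,J}_{i,j})\big]/d_x^2+\big[\kappa^{I,J}_{i,j+\frac12}(u^{I,J}_{i,j+1}-u^{I,J}_{i,j})+\kappa^{I,J}_{i,j-\frac12}(u^{I,J}_{i,j-1}-u^{I,J}_{i,j})\big]/d_y^2,$$ with real diffusivities satisfying $\kappa^{I,J}_{1/2,j}=\kappa^{K,J}_{n_x+1/2,j}$ for all $I,K,J,j$ and $\kappa^{I,J}_{i,1/2}=\kappa^{I,K}_{i,n_y+1/2}$ for all $I,J,K,i$. Edge values are given by $$u^{I,J}_{0,j}=\sum_K\mathcal I^{IK}_{1n_x}u^{K,J}_{n_x,j},\quad u^{I,J}_{n_x+1,j}=\sum_K\mathcal I^{IK}_{n_x1}u^{K,J}_{1,j}\ (j=1,\dots,n_y),$$ $$u^{I,J}_{i,0}=\sum_K\mathcal J^{JK}_{1n_y}u^{I,K}_{i,n_y},\quad u^{I,J}_{i,n_y+1}=\sum_K\mathcal J^{JK}_{n_y1}u^{I,K}_{i,1}\ (i=1,\dots,n_x),$$ where $\mathcal I$ are the 1D spectral or Lagrangian interpolation coefficients in $x$ (with $N_x$ patches and ratio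 $r_x=h_x/H_x$) and $\mathcal J$ those in $y$ (with $N_y$ patches and ratio $r_y=h_y/H_y$). Then the linear system $\partial_t\mathbf u=\mathcal L\mathbf u$ on all interior values has a real symmetric (self-adjoint) matrix $\mathcal L$.
   Context: 1D spectral interpolation coefficients (for $N$ patches, spacing $H$, ratio $r$, domain length $L=NH$): $\mathcal I^{IJ}_{n1}=\frac1N\sum_{k\in\mathcal K}e^{\mathrm ikH(I-J+r)}$, $\mathcal I^{IJ}_{1n}=\frac1N\sum_{k\in\mathcal K}e^{\mathrm ikH(I-J-r)}$, $\mathcal K$ a fixed finite symmetric set of integer multiples of $2\pi/L$. 1D Lagrangian interpolation coefficients of order $P$: defined by $u^I_{n+1}=u^I_1+\sum_{k=1}^P\big(\prod_{\ell=0}^{k-1}(r^2-\ell^2)\big)\frac{(2k/r)\mu\delta^{2k-1}+\delta^{2k}}{(2k)!}u^I_1=\sum_J\mathcal I^{IJ}_{n1}u^J_1$ and $u^I_{0}=u^I_n+\sum_{k=1}^P\big(\prod_{\ell=0}^{k-1}(r^2-\ell^2)\big)\frac{-(2k/r)\mu\delta^{2k-1}+\delta^{2k}}{(2k)!}u^I_n=\sum_J\mathcal I^{IJ}_{1n}u^J_n$, where $Eu^I=u^{I+1}$ cyclically, $\mu\delta^{2k-1}:=\tfrac12(E-E^{-1})(E-2+E^{-1})^{k-1}$, $\delta^{2k}:=(E-2+E^{-1})^k$. Patch widths $h_x=n_xd_x$, $h_y=n_yd_y$. *)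

From HB Require Import structures.
From mathcomp Require Import all_boot all_order all_algebra.
From mathcomp Require Import reals trigo.
From mathcomp Require Import complex.
Set Implicit Arguments. Unset Strict Implicit. Unset Printing Implicit Defensive.
Import Order.TTheory GRing.Theory Num.Theory.
Local Open Scope ring_scope.

Definition toC (R : rcfType) (x : R) : R[i] := Complex x 0.

Definition cexpi (R : realType) (t : R) : R[i] := Complex (cos t) (sin t).

(* choice of 1D interpolation scheme:
   - Spectral s : the wavenumber set K = { m * 2 pi / L | m \in s }, s : seq int
   - Lagrange P : Lagrangian interpolation of order P *)
Inductive interp := Spectral of seq int | Lagrange of nat.

Definition interp_ok (m : interp) : Prop :=
  match m with
  | Spectral s => uniq s /\ (forall k, k \in s -> - k \in s)
  | Lagrange _ => True
  end.

(* Spectral coefficients, N patches, spacing H, ratio r, L = N H.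
   sgn = 1 gives I_{n1}, sgn = -1 gives I_{1n}:
   (1/N) sum_{k in K} exp(i k H (I - J + sgn r)) *)
Definition spec_coef (R : realType) (N : nat) (H r : R) (s : seq int) (sgn : R)
    (I J : 'I_N) : R[i] :=
  (N%:R : R[i])^-1 *
  \sum_(m <- s) cexpi ((m%:~R * (2 * pi / (N%:R * H))) * H
                          * ((I : nat)%:R - (J : nat)%:R + sgn * r)).

(* cyclic shift E : (E u)^I = u^{I+1} (indices mod N) *)
Definition shiftE (R : pzRingType) (N : nat) : 'M[R]_N :=
  \matrix_(I < N, J < N) (((J : nat) == (I.+1 %% N)%N)%:R).

Definition delta2 (R : fieldType) (N : nat) : 'M[R]_N :=
  shiftE R N - 2%:M + invmx (shiftE R N).

(* mu delta^{2k-1} = 1/2 (E - E^{-1}) (E - 2 + E^{-1})^{k-1} *)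
Definition mudelta (R : fieldType) (N k : nat) : 'M[R]_N :=
  (2^-1 : R) *: ((shiftE R N - invmx (shiftE R N)) *m (delta2 R N) ^+ k.-1).

Definition deltaev (R : fieldType) (N k : nat) : 'M[R]_N := (delta2 R N) ^+ k.

Definition lag_prod (R : fieldType) (r : R) (k : nat) : R :=
  \prod_(l < k) (r ^+ 2 - (l : nat)%:R ^+ 2).

Definition lag_mx (R : fieldType) (N P : nat) (r sgn : R) : 'M[R]_N :=
  1%:M + \sum_(1 <= k < P.+1)
    ((lag_prod r k) / ((2 * k)`!)%:R) *:
      ((sgn * (2 * k)%:R / r) *: mudelta R N k + deltaev R N k).

(* the interpolation coefficients I^{IJ}_{n1} (sgn = 1) / I^{IJ}_{1n} (sgn = -1) *)
Definition icoef (R : realType) (m : interp) (N : nat) (H r sgn : R)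
    (I J : 'I_N) : R[i] :=
  match m with
  | Spectral s => spec_coef H r s sgn I J
  | Lagrange P => toC (lag_mx N P r sgn I J)
  end.

(* index of an interior value u^{I,J}_{i,j}: (I, J, i-1, j-1) *)
Definition pidx (Nx Ny nx ny : nat) := ('I_Nx * 'I_Ny * 'I_nx * 'I_ny)%type.

Section Scheme.
Variables (R : realType) (Nx Ny nx ny : nat) (dx dy Hx Hy : R)
  (mx my : interp)
  (* kx I J i j = kappa^{I,J}_{i+1/2, j}  (i = 0..nx, j = 1..ny)
     ky I J i j = kappa^{I,J}_{i, j+1/2}  (i = 1..nx, j = 0..ny) *)
  (kx ky : 'I_Nx -> 'I_Ny -> nat -> nat -> R).

Definition rx : R := (nx%:R * dx) / Hx.   (* h_x / H_x, h_x = n_x d_x *)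
Definition ry : R := (ny%:R * dy) / Hy.

(* interior value u^{I,J}_{i,j} for 1 <= i <= nx, 1 <= j <= ny (else 0) *)
Definition uval (u : pidx Nx Ny nx ny -> R[i]) (I : 'I_Nx) (J : 'I_Ny)
    (i j : nat) : R[i] :=
  if (0 < i)%N && (0 < j)%N then
    match (insub i.-1 : option 'I_nx), (insub j.-1 : option 'I_ny) with
    | Some a, Some b => u (I, J, a, b)
    | _, _ => 0
    end
  else 0.

Definition uext (u : pidx Nx Ny nx ny -> R[i]) (I : 'I_Nx) (J : 'I_Ny)
    (i j : nat) : R[i] :=
  if (i == 0%N) && (0 < j <= ny)%N then
    \sum_(K < Nx) icoef mx Hx rx (-1) I K * uval u K J nx j
  else if (i == nx.+1) && (0 < j <= ny)%N then
    \sum_(K < Nx) icoef mx Hx rx 1 I K * uval u K J 1 j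
  else if (j == 0%N) && (0 < i <= nx)%N then
    \sum_(K < Ny) icoef my Hy ry (-1) J K * uval u I K i ny
  else if (j == ny.+1) && (0 < i <= nx)%N then
    \sum_(K < Ny) icoef my Hy ry 1 J K * uval u I K i 1
  else uval u I J i j.

Definition patch_rhs (u : pidx Nx Ny nx ny -> R[i]) (t : pidx Nx Ny nx ny)
    : R[i] :=
  let I : 'I_Nx := t.1.1.1 in
  let J : 'I_Ny := t.1.1.2 in
  let i := (t.1.2 : nat).+1 in
  let j := (t.2 : nat).+1 in
  let e := uext u I J in
  (toC (kx I J i j) * (e i.+1 j - e i j)
     + toC (kx I J i.-1 j) * (e i.-1 j - e i j)) / toC (dx ^+ 2)
  + (toC (ky I J i j) * (e i j.+1 - e i j)
     + toC (ky I J i j.-1) * (e i j.-1 - e i j)) / toC (dy ^+ 2).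

End Scheme.

From Pilot Require Import Defs.
From HB Require Import structures.
From mathcomp Require Import all_boot all_order all_algebra all_fingroup.
From mathcomp Require Import reals trigo complex.
From mathcomp Require Import ring zify.
Import Order.TTheory GRing.Theory Num.Theory.
Local Open Scope ring_scope.

(* The right-hand side [patch_rhs u t] is a linear function of the interior
   values [u]; its matrix is [L t s = patch_rhs (unitv s) t], where [unitv s]
   is the unit grid function at the interior point [s].  We show
   - every functional built from interior values by evaluation, interpolation
     and the finite-difference stencil expands in the basis [unitv s];
   - both interpolation schemes have real coefficients and satisfy
     [I_{1n} = I_{n1}^T]: for spectral interpolation because the wavenumber
     set is symmetric, for Lagrangian interpolation because the cyclic shift
     [E] is orthogonal, so the central differences are symmetric and the odd
     differences antisymmetric;
   - hence the matrix entries are real, and, off the diagonal, the entry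
     [L t s] is a sum of four face couplings, each equal to the opposite
     face coupling of [L s t] (across patch boundaries by [I_{1n} = I_{n1}^T]
     and the periodicity of the diffusivities).
   The theorem takes [L] to be the real part of this matrix. *)

Lemma toC_real (R : rcfType) (x : R) : toC x \is Num.real.
Proof. by apply/complex_realP; exists x. Qed.

Lemma real_toC_Re (R : rcfType) (z : R[i]) : z \is Num.real -> z = toC (complex.Re z).
Proof. by move=> /RRe_real. Qed.

Lemma big_oppz (V : nmodType) (s : seq int) (F : int -> V) :
  uniq s -> (forall k, k \in s -> - k \in s) ->
  \sum_(m <- s) F m = \sum_(m <- s) F (- m).
Proof.
move=> s_uniq s_sym; rewrite -(big_map (fun m => - m) predT F).
apply: perm_big; apply: uniq_perm => //; first by rewrite map_inj_uniq //; exact: oppr_inj.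
move=> k; rewrite -[k in RHS]opprK mem_map; last exact: oppr_inj.
by apply/idP/idP => /s_sym; rewrite ?opprK.
Qed.

Section SpectralCoefficients.
Variables (R : realType) (s : seq int).
Hypotheses (s_uniq : uniq s) (s_sym : forall k, k \in s -> - k \in s).

Definition phase_sum (c x : R) : R[i] := \sum_(m <- s) cexpi (m%:~R * c * x).

Lemma phase_sum_even c x : phase_sum c (- x) = phase_sum c x.
Proof.
rewrite /phase_sum (@big_oppz _ _ _ s_uniq s_sym); apply: eq_bigr => m _.
by rewrite intrN mulNr mulrNN.
Qed.

Lemma phase_sum_real c x : phase_sum c x \is Num.real.
Proof.
rewrite CrealE; apply/eqP; rewrite rmorph_sum -[RHS]phase_sum_even.
apply: eq_bigr => m _.
by rewrite /cexpi mulrN cosN sinN.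
Qed.

Lemma spec_coefE N (H r sgn : R) (I J : 'I_N) :
  spec_coef H r s sgn I J =
  (N%:R)^-1 * phase_sum (2 * pi / (N%:R * H) * H) ((I : nat)%:R - (J : nat)%:R + sgn * r).
Proof. by congr (_ * _); apply: eq_bigr => m _; rewrite !mulrA. Qed.

Lemma spec_coef_real N (H r sgn : R) (I J : 'I_N) : spec_coef H r s sgn I J \is Num.real.
Proof. by rewrite spec_coefE rpredM ?rpredV ?rpred_nat ?phase_sum_real. Qed.

Lemma spec_coef_tr N (H r : R) (I J : 'I_N) :
  spec_coef H r s (-1) I J = spec_coef H r s 1 J I.
Proof.
rewrite !spec_coefE -phase_sum_even; congr (_ * phase_sum _ _); ring.
Qed.

End SpectralCoefficients.

Lemma comm_scalar_mx (F : fieldType) (N : nat) (B : 'M[F]_N) (a : F) : GRing.comm B a%:M.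
Proof. by rewrite /GRing.comm -!mulmxE scalar_mxC. Qed.

Section OrthogonalDifferences.
Variables (F : fieldType) (N : nat) (A : 'M[F]_N).
Hypotheses (A_orthr : A * A^T = 1) (A_orthl : A^T * A = 1).

Let D := A - 2%:M + A^T.

Lemma comm_orth : GRing.comm A A^T.
Proof. by rewrite /GRing.comm A_orthr A_orthl. Qed.

Lemma central_diff_tr : D^T = D.
Proof. by rewrite /D !linearD linearN /= tr_scalar_mx trmxK [LHS]addrC addrA [RHS]addrAC. Qed.

Lemma central_diff_exp_tr k : (D ^+ k)^T = D ^+ k.
Proof.
elim: k => [|k IH]; first by rewrite !expr0 trmx1.
by rewrite [in LHS]exprS -mulmxE trmx_mul IH central_diff_tr mulmxE -exprSr.
Qed.

(* Odd and central differences commute, as polynomials in [A] and [A^T]. *)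
Lemma comm_odd_central : GRing.comm (A - A^T) D.
Proof.
have comm_TA := commr_sym comm_orth.
apply: commrD; last by apply: commr_sym; apply: commrB; [exact: comm_TA|exact: commr_refl].
apply: commrB; last exact: comm_scalar_mx.
by apply: commr_sym; apply: commrB; [exact: commr_refl|exact: comm_orth].
Qed.

Lemma odd_central_tr k : ((A - A^T) * D ^+ k)^T = - ((A - A^T) * D ^+ k).
Proof.
rewrite -mulmxE trmx_mul central_diff_exp_tr linearB /= trmxK mulmxE.
by rewrite -opprB mulrN (commrX k comm_odd_central).
Qed.

End OrthogonalDifferences.

Section LagrangeCoefficients.
Variables (F : fieldType) (N : nat).
Local Notation E := (shiftE F N).

(* The cyclic shift is a permutation matrix, hence orthogonal. *)
Lemma shiftE_perm : E = perm_mx (perm (@ordS_inj N)).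
Proof. by apply/matrixP => i j; rewrite !mxE permE eq_sym. Qed.

Lemma shiftE_orthr : E * E^T = 1.
Proof. by rewrite -mulmxE shiftE_perm tr_perm_mx -perm_mxM mulgV perm_mx1. Qed.

Lemma shiftE_orthl : E^T * E = 1.
Proof. by rewrite -mulmxE shiftE_perm tr_perm_mx -perm_mxM mulVg perm_mx1. Qed.

Lemma invmx_shiftE : invmx E = E^T.
Proof.
have [E_unit _] := mulmx1_unit shiftE_orthr.
by rewrite -[LHS]mulmx1 -[1%:M]shiftE_orthr mulmxA mulVmx // mul1mx.
Qed.

(* Consequently [I_{1n} = I_{n1}^T] also for Lagrangian interpolation:
   reversing the direction only flips the sign of the odd differences. *)
Lemma lag_mx_tr P (r : F) : (lag_mx N P r (-1))^T = lag_mx N P r 1.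
Proof.
rewrite /lag_mx linearD /= tr_scalar_mx linear_sum /=; congr (_ + _).
apply: eq_bigr => k _; rewrite !linearZ /= linearD /= linearZ /=.
rewrite /mudelta /deltaev /delta2 invmx_shiftE !linearZ /= mulmxE.
rewrite odd_central_tr ?central_diff_exp_tr ?shiftE_orthr ?shiftE_orthl //.
by rewrite !scalerN -scaleNr !mulNr opprK.
Qed.

End LagrangeCoefficients.

Lemma icoef_tr (R : realType) (m : interp) N (H r : R) (I J : 'I_N) :
  interp_ok m -> icoef m H r (-1) I J = icoef m H r 1 J I.
Proof.
case: m => [s [s_uniq s_sym]|P _] /=; first exact: spec_coef_tr.
by rewrite -lag_mx_tr [in RHS]mxE.
Qed.

Lemma icoef_real (R : realType) (m : interp) N (H r sgn : R) (I J : 'I_N) :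
  interp_ok m -> icoef m H r sgn I J \is Num.real.
Proof.
case: m => [s [s_uniq s_sym]|P _] /=; first exact: spec_coef_real.
exact: toC_real.
Qed.

Lemma sum_pick (T : finType) (V : pzSemiRingType) (c : T -> V) (k : T) (b : bool) :
  \sum_K c K * ((K == k) && b)%:R = c k * b%:R.
Proof.
rewrite (bigD1 k) //= eqxx big1 ?addr0 // => K /negbTE Kk.
by rewrite Kk mulr0.
Qed.

Lemma indicator_eq (V : pzSemiRingType) (x y : V) (b1 b2 : bool) :
  b1 = b2 -> (b1 -> x = y) -> x * b1%:R = y * b2%:R.
Proof. by move=> <-; case: b1 => [->|]; rewrite ?mulr0. Qed.

Section PatchScheme.
Variables (R : realType) (Nx Ny nx ny : nat) (dx dy Hx Hy : R)
  (mx my : interp) (kx ky : 'I_Nx -> 'I_Ny -> nat -> nat -> R).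

Local Notation P := (pidx Nx Ny nx ny).
Local Notation uval := (@uval R Nx Ny nx ny).
Local Notation uext := (@uext R Nx Ny nx ny dx dy Hx Hy mx my).
Local Notation rhs := (@patch_rhs R Nx Ny nx ny dx dy Hx Hy mx my kx ky).

Definition unitv (s : P) : P -> R[i] := fun t => (t == s)%:R.

Definition expands (F : (P -> R[i]) -> R[i]) : Prop :=
  forall u, F u = \sum_s u s * F (unitv s).

Lemma uval_expands I J i j : expands (fun u => uval u I J i j).
Proof.
move=> u; rewrite /Defs.uval; case: ifP => _; last by rewrite big1 // => s _; rewrite mulr0.
case: insub => [a|]; last by rewrite big1 // => s _; rewrite mulr0.
case: insub => [b|]; last by rewrite big1 // => s _; rewrite mulr0.
rewrite (bigD1 (I, J, a, b)) //= /unitv eqxx mulr1 big1 ?addr0 // => s /negbTE.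
by rewrite eq_sym => ->; rewrite mulr0.
Qed.

Lemma sum_expands N (c : 'I_N -> R[i]) (F : 'I_N -> (P -> R[i]) -> R[i]) :
  (forall K, expands (F K)) -> expands (fun u => \sum_K c K * F K u).
Proof.
move=> F_exp u; under eq_bigr do rewrite F_exp mulr_sumr.
rewrite exchange_big /=; apply: eq_bigr => s _; rewrite mulr_sumr.
by apply: eq_bigr => K _; rewrite mulrCA.
Qed.

Lemma if_expands (b : bool) (F G : (P -> R[i]) -> R[i]) :
  expands F -> expands G -> expands (fun u => if b then F u else G u).
Proof. by case: b. Qed.

Lemma uext_expands I J i j : expands (fun u => uext u I J i j).
Proof.
by do 4 (apply: if_expands; first by apply: sum_expands => K; apply: uval_expands);
  apply: uval_expands.
Qed.

Lemma rhs_expands t : expands (fun u => rhs u t).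
Proof.
move=> u; rewrite /patch_rhs /= !(uext_expands _ _ _ _ u).
rewrite -!sumrB !mulr_sumr -!big_split /= !mulr_suml -big_split /=.
by apply: eq_bigr => s _; ring.
Qed.

Section RealData.
Hypotheses (mx_ok : interp_ok mx) (my_ok : interp_ok my).
Variable u : P -> R[i].
Hypothesis u_real : forall s, u s \is Num.real.

(* Since all interpolation coefficients are real, real interior data give
   real edge values and a real right-hand side. *)
Lemma uval_real I J i j : uval u I J i j \is Num.real.
Proof.
rewrite /Defs.uval; case: ifP => _ //.
by case: insub => [a|] //; case: insub => [b|].
Qed.

Lemma uext_real I J i j : uext u I J i j \is Num.real.
Proof.
rewrite /Defs.uext; do 4 (case: ifP => _; first by
  apply: rpred_sum => K _; rewrite rpredM ?icoef_real ?uval_real).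
exact: uval_real.
Qed.

Lemma rhs_real t : rhs u t \is Num.real.
Proof.
by rewrite /patch_rhs /= !(rpredD, rpredM, rpredB, rpredN, rpredV, uext_real, toC_real).
Qed.

End RealData.

Local Notation cx := (icoef mx Hx (rx nx dx Hx)).
Local Notation cy := (icoef my Hy (ry ny dy Hy)).

Lemma uval_unitv K J' (a' : 'I_nx) (b' : 'I_ny) I J i j : (0 < i)%N -> (0 < j)%N ->
  uval (unitv (K, J', a', b')) I J i j = [&& I == K, J == J', i.-1 == a' & j.-1 == b']%:R.
Proof.
move=> i_pos j_pos; rewrite /Defs.uval i_pos j_pos /=.
case: insubP => [a _ <-|/negbTE i_big]; last first.
  by case: (i.-1 =P a') => [ia|]; [move: i_big; rewrite ia ltn_ord|rewrite !andbF].
case: insubP => [b _ <-|/negbTE j_big]; last first.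
  by case: (j.-1 =P b') => [jb|]; [move: j_big; rewrite jb ltn_ord|rewrite !andbF].
by rewrite /unitv !xpair_eqE !val_eqE !andbA.
Qed.

Lemma uval_ord u I J (a : 'I_nx) (b : 'I_ny) : uval u I J a.+1 b.+1 = u (I, J, a, b).
Proof. by rewrite /Defs.uval /= !valK. Qed.

Lemma uext_interior u I J (a : 'I_nx) (b : 'I_ny) : uext u I J a.+1 b.+1 = u (I, J, a, b).
Proof.
by rewrite /Defs.uext /= !eqSS (ltn_eqF (ltn_ord a)) (ltn_eqF (ltn_ord b)) uval_ord.
Qed.

Lemma uext_east u I J (a : 'I_nx) (b : 'I_ny) : uext u I J a.+2 b.+1 =
  if a.+1 == nx then \sum_K cx 1 I K * uval u K J 1 b.+1 else uval u I J a.+2 b.+1.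
Proof. by rewrite /Defs.uext /= !eqSS (ltn_ord b) (ltn_eqF (ltn_ord b)) andbT. Qed.

Lemma uext_west u I J (a : 'I_nx) (b : 'I_ny) : uext u I J a b.+1 =
  if a == 0 :> nat then \sum_K cx (-1) I K * uval u K J nx b.+1 else uval u I J a b.+1.
Proof.
by rewrite /Defs.uext /= !eqSS (ltn_ord b) (ltn_eqF (ltn_ord b)) (ltn_eqF (leqW (ltn_ord a))) andbT.
Qed.

Lemma uext_north u I J (a : 'I_nx) (b : 'I_ny) : uext u I J a.+1 b.+2 =
  if b.+1 == ny then \sum_K cy 1 J K * uval u I K a.+1 1 else uval u I J a.+1 b.+2.
Proof. by rewrite /Defs.uext /= !eqSS (ltn_ord a) (ltn_eqF (ltn_ord a)) andbT. Qed.

Lemma uext_south u I J (a : 'I_nx) (b : 'I_ny) : uext u I J a.+1 b =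
  if b == 0 :> nat then \sum_K cy (-1) J K * uval u I K a.+1 ny else uval u I J a.+1 b.
Proof.
by rewrite /Defs.uext /= !eqSS (ltn_ord a) (ltn_eqF (ltn_ord a)) (ltn_eqF (leqW (ltn_ord b))) andbT.
Qed.

(* The coupling of the interior point [t] to the value at [s] through each
   of the four faces of the grid cell of [t]. *)
Definition east (t s : P) : R[i] :=
  toC (kx t.1.1.1 t.1.1.2 t.1.2.+1 t.2.+1) * uext (unitv s) t.1.1.1 t.1.1.2 t.1.2.+2 t.2.+1.
Definition west (t s : P) : R[i] :=
  toC (kx t.1.1.1 t.1.1.2 t.1.2 t.2.+1) * uext (unitv s) t.1.1.1 t.1.1.2 t.1.2 t.2.+1.
Definition north (t s : P) : R[i] :=
  toC (ky t.1.1.1 t.1.1.2 t.1.2.+1 t.2.+1) * uext (unitv s) t.1.1.1 t.1.1.2 t.1.2.+1 t.2.+2.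
Definition south (t s : P) : R[i] :=
  toC (ky t.1.1.1 t.1.1.2 t.1.2.+1 t.2) * uext (unitv s) t.1.1.1 t.1.1.2 t.1.2.+1 t.2.

Lemma rhs_offdiag t s : t != s -> rhs (unitv s) t =
  (east t s + west t s) / toC (dx ^+ 2) + (north t s + south t s) / toC (dy ^+ 2).
Proof.
case: t => [[[I J] a] b] ts.
by rewrite /patch_rhs /= uext_interior {2 4 6 8}/unitv (negbTE ts) !subr0.
Qed.

Section Symmetry.
Hypotheses (nx_pos : (0 < nx)%N) (ny_pos : (0 < ny)%N).
Hypotheses (mx_ok : interp_ok mx) (my_ok : interp_ok my).
Hypothesis kx_periodic : forall (I K : 'I_Nx) (J : 'I_Ny) (j : nat), (0 < j <= ny)%N ->
  kx I J 0%N j = kx K J nx j.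
Hypothesis ky_periodic : forall (I : 'I_Nx) (J K : 'I_Ny) (i : nat), (0 < i <= nx)%N ->
  ky I J i 0%N = ky I K i ny.

(* Flux through a face is seen identically from both sides: across a patch
   boundary this is where [I_{1n} = I_{n1}^T] and the periodicity of the
   diffusivities enter. *)
Lemma east_west t s : east t s = west s t.
Proof.
case: t => [[[I J] a] b]; case: s => [[[K J'] a'] b'].
rewrite /east /west /= uext_east uext_west.
case: (a.+1 =P nx) => [a_last|a_inner]; case: a' => [[|a'] a'_lt] /=.
- under eq_bigr do rewrite uval_unitv //.
  under [in RHS]eq_bigr do rewrite uval_unitv //.
  rewrite !sum_pick icoef_tr // !mulrA; apply: indicator_eq.
    by rewrite -!val_eqE /=; lia.
  move=> /and3P[/eqP <- _ /eqP <-] /=.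
  by rewrite a_last -(kx_periodic K I) ?ltn_ord.
- under eq_bigr do rewrite uval_unitv //.
  rewrite sum_pick uval_unitv // !mulrA.
  by apply: indicator_eq; rewrite -!val_eqE /=; lia.
- under [in RHS]eq_bigr do rewrite uval_unitv //.
  rewrite sum_pick uval_unitv // !mulrA.
  by apply: indicator_eq; rewrite -!val_eqE /=; lia.
- rewrite !uval_unitv //; apply: indicator_eq.
    by rewrite -!val_eqE /=; lia.
  by move=> /and4P[/eqP <- /eqP <- /eqP [->] /eqP <-].
Qed.

Lemma north_south t s : north t s = south s t.
Proof.
case: t => [[[I J] a] b]; case: s => [[[K J'] a'] b'].
rewrite /north /south /= uext_north uext_south.
case: (b.+1 =P ny) => [b_last|b_inner]; case: b' => [[|b'] b'_lt] /=.
- under eq_bigr do rewrite uval_unitv // andbCA.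
  under [in RHS]eq_bigr do rewrite uval_unitv // andbCA.
  rewrite !sum_pick icoef_tr // !mulrA; apply: indicator_eq.
    by rewrite -!val_eqE /=; lia.
  move=> /and3P[/eqP <- /eqP <- _] /=.
  by rewrite b_last -(ky_periodic I J' J) ?ltn_ord.
- under eq_bigr do rewrite uval_unitv // andbCA.
  rewrite sum_pick uval_unitv // !mulrA.
  by apply: indicator_eq; rewrite -!val_eqE /=; lia.
- under [in RHS]eq_bigr do rewrite uval_unitv // andbCA.
  rewrite sum_pick uval_unitv // !mulrA.
  by apply: indicator_eq; rewrite -!val_eqE /=; lia.
- rewrite !uval_unitv //; apply: indicator_eq.
    by rewrite -!val_eqE /=; lia.
  by move=> /and4P[/eqP <- /eqP <- /eqP <- /eqP [->]].
Qed.

Lemma rhs_unitv_sym t s : rhs (unitv s) t = rhs (unitv t) s.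
Proof.
have [<-|ts] := eqVneq t s; first by [].
have st : s != t by rewrite eq_sym.
rewrite !rhs_offdiag // !east_west !north_south.
by rewrite [west s t + _]addrC [south s t + _]addrC.
Qed.

End Symmetry.
End PatchScheme.

Arguments unitv {R Nx Ny nx ny} s.

(* The matrix of the scheme is [L t s = Re (patch_rhs (unitv s) t)]; its
   entries are real, so [L] represents the scheme, and it is symmetric. *)
Theorem corollary7 (R : realType) (Nx Ny nx ny : nat) (dx dy Hx Hy : R)
    (mx my : interp) (kx ky : 'I_Nx -> 'I_Ny -> nat -> nat -> R) :
  (0 < nx)%N -> (0 < ny)%N -> 0 < dx -> 0 < dy -> 0 < Hx -> 0 < Hy ->
  interp_ok mx -> interp_ok my ->
  (forall (I K : 'I_Nx) (J : 'I_Ny) (j : nat), (0 < j <= ny)%N ->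
     kx I J 0%N j = kx K J nx j) ->
  (forall (I : 'I_Nx) (J K : 'I_Ny) (i : nat), (0 < i <= nx)%N ->
     ky I J i 0%N = ky I K i ny) ->
  exists L : pidx Nx Ny nx ny -> pidx Nx Ny nx ny -> R,
    (forall (u : pidx Nx Ny nx ny -> R[i]) (t : pidx Nx Ny nx ny),
       patch_rhs dx dy Hx Hy mx my kx ky u t = \sum_s toC (L t s) * u s) /\
    (forall t s, L t s = L s t).
Proof.
move=> nx_pos ny_pos _ _ _ _ mx_ok my_ok kx_periodic ky_periodic.
exists (fun t s => complex.Re (patch_rhs dx dy Hx Hy mx my kx ky (unitv s) t)); split.
- move=> u t; rewrite rhs_expands; apply: eq_bigr => s _.
  by rewrite mulrC -real_toC_Re // rhs_real // => s'; exact: rpred_nat.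
- by move=> t s; rewrite rhs_unitv_sym.
Qed.
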